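(* Let $Y\sim$ exGPD$(\sigma,\xi)$ with $\sigma>0$, and let $u\in\mathbb{R}$ (with $u<\log(-\sigma/\xi)$ when $\xi<0$). The mean excess function $e_Y(u)=E[Y-u\mid Y>u]$ is finite and given by $$e_Y(u)=\begin{cases}\big(\bar F_Y(u)\big)^{-1}\,B\!\left(\left(1+\xi e^{u}/\sigma\right)^{-1};\,1/\xi,\,0\right), & \xi>0,\\[2pt] \big(\bar F_Y(u)\big)^{-1}\,B\!\left(1+\xi e^{u}/\sigma;\,1-1/\xi,\,0\right), & \xi<0,\\[2pt] \exp\!\left(e^{u}/\sigma\right)\,\Gamma\!\left(0,\,e^{u}/\sigma\right), & \xi=0,\end{cases}$$ where $\bar F_Y(u)=(1+\xi e^u/\sigma)^{-1/\xi}$ for $\xi\neq0$, $B(x;a,0)=\int_0^x t^{a-1}(1-t)^{-1}\,dt$ for $x\in(0,1)$, $a>0$, and $\Gamma(s,x)=\int_x^\infty t^{s-1}e^{-t}\,dt$. Consequently, the conditional tail expectation at level $p\in(0,1)$ is $E[Y\mid Y>y_p]=y_p+e_Y(y_p)$, where $y_p=\log\!\big(\frac{\sigma}{\xi}((1-p)^{-\xi}-1)\big)$ for $\xi\neq0$ is the $p$-quantile of $Y$.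
   Context: For $\sigma>0$ and $\xi\in\mathbb{R}$, the generalized Pareto distribution GPD$(\sigma,\xi)$ has distribution function $G(x)=1-(1+\xi x/\sigma)^{-1/\xi}$ for $\xi\neq 0$, with support $x\ge 0$ if $\xi>0$ and $0\le x\le -\sigma/\xi$ if $\xi<0$; for $\xi=0$ it is $G(x)=1-e^{-x/\sigma}$, $x\ge 0$. A random variable $Y$ has the exponentiated generalized Pareto distribution exGPD$(\sigma,\xi)$ if $Y=\log X$ with $X\sim$ GPD$(\sigma,\xi)$. Equivalently, for $\xi\neq0$ its distribution function is $F_Y(y)=1-(1+\xi e^y/\sigma)^{-1/\xi}$, with support $y\in\mathbb{R}$ if $\xi>0$ and $-\infty<y\le \log(-\sigma/\xi)$ if $\xi<0$. For $\xi=0$ it is $F_Y(y)=1-\exp(-e^{y}/\sigma)$, $y\in\mathbb{R}$. Its density is $f_Y(y)=\frac{e^y}{\sigma}(1+\xi e^y/\sigma)^{-1/\xi-1}$ on the support for $\xi\neq0$, and $f_Y(y)=\frac{1}{\sigma}e^{y-e^y/\sigma}$ for $\xi=0$. We write $\bar F_Y=1-F_Y$. *)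

From Stdlib Require Import Reals Lra.
Open Scope R_scope.

(** Improper Riemann integral over the open interval (a, b), where the upper
    end b is either a real number ([Some B]) or +infinity ([None]).
    [has_improper_integral f a b l] : f is Riemann integrable on every compact
    [c,d] inside (a,b) and RiemannInt f c d -> l as c -> a+ and d -> b-. *)
Definition below_upper (b : option R) (d : R) : Prop :=
  match b with None => True | Some B => d < B end.

Definition near_upper (b : option R) (delta M d : R) : Prop :=
  match b with None => M < d | Some B => B - delta < d < B end.

Definition has_improper_integral (f : R -> R) (a : R) (b : option R) (l : R) : Prop :=
  (forall c d, a < c -> c <= d -> below_upper b d -> inhabited (Riemann_integrable f c d)) /\
  (forall eps, 0 < eps -> exists delta M, 0 < delta /\
     forall c d (pr : Riemann_integrable f c d),
       a < c < a + delta -> near_upper b delta M d ->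
       Rabs (RiemannInt pr - l) < eps).

Definition is_incBeta0 (x a v : R) : Prop :=
  has_improper_integral (fun t => Rpower t (a - 1) / (1 - t)) 0 (Some x) v.

Definition is_uppGamma (s x v : R) : Prop :=
  has_improper_integral (fun t => Rpower t (s - 1) * exp (- t)) x None v.

Definition exgpd_sf (sigma xi y : R) : R :=
  if Req_EM_T xi 0 then exp (- (exp y / sigma))
  else Rpower (1 + xi * exp y / sigma) (- / xi).

Definition exgpd_cdf (sigma xi y : R) : R := 1 - exgpd_sf sigma xi y.

Definition exgpd_pdf (sigma xi y : R) : R :=
  if Req_EM_T xi 0 then / sigma * exp (y - exp y / sigma)
  else exp y / sigma * Rpower (1 + xi * exp y / sigma) (- / xi - 1).

Definition exgpd_upper (sigma xi : R) : option R :=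
  if Rlt_dec xi 0 then Some (ln (- sigma / xi)) else None.

(** e is the mean excess E[Y - u | Y > u]:  E[(Y-u) 1{Y>u}] = e * P(Y > u),
    with the expectation an (improper) integral against the density. *)
Definition is_mean_excess (sigma xi u e : R) : Prop :=
  has_improper_integral (fun y => (y - u) * exgpd_pdf sigma xi y) u
    (exgpd_upper sigma xi) (e * exgpd_sf sigma xi u).

(** c is E[Y | Y > y]:  E[Y 1{Y>y}] = c * P(Y > y). *)
Definition is_cond_tail_exp (sigma xi y c : R) : Prop :=
  has_improper_integral (fun t => t * exgpd_pdf sigma xi t) y
    (exgpd_upper sigma xi) (c * exgpd_sf sigma xi y).

Definition exgpd_quantile (sigma xi p : R) : R :=
  ln (sigma / xi * (Rpower (1 - p) (- xi) - 1)).

(* Write [s] for the survival function, [f = - s'] for the density and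
   [S y = int_u^y s].  Integrating by parts,
     int_u^y (t - u) f t dt = S y - (y - u) s y,
   and [S] is increasing and bounded, while [s] and [(y - u) s] vanish at the
   upper end of the support (by exponential decay when xi >= 0, by continuity
   at the finite endpoint when xi < 0).  So the mean-excess integral converges
   to [S(oo) = e_Y(u) s(u)], and E[Y 1{Y > u}] to [S(oo) + u s(u)].  The
   substitutions [y = ln (sigma/xi (1/t - 1))], [y = ln (sigma/xi (t - 1))] and
   [y = ln (sigma t)] turn [S(oo)] into the incomplete beta and gamma
   integrals, and the quantile is obtained by inverting [F_Y]. *)

From Stdlib Require Import Reals Lra Classical.
From Coquelicot Require Import Coquelicot.
Open Scope R_scope.

(** * Improper integrals as limits along filters *)

Definition at_upper (b : option R) : (R -> Prop) -> Prop :=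
  match b with None => Rbar_locally p_infty | Some B => at_left B end.

Global Instance at_upper_proper_filter (b : option R) : ProperFilter (at_upper b).
Proof. destruct b; [apply at_left_proper_filter | apply Rbar_locally_filter]. Qed.

Lemma at_right_near (a : R) (P : R -> Prop) :
  at_right a P <-> exists delta, 0 < delta /\ forall c, a < c < a + delta -> P c.
Proof.
  split.
  - intros [eps HP]. exists eps; split; [apply cond_pos|].
    intros c Hc. apply HP; [|lra]. change (Rabs (c - a) < eps). apply Rabs_def1; lra.
  - intros [delta [Hdelta HP]]. exists (mkposreal delta Hdelta).
    intros c Hc Hac. change (Rabs (c - a) < delta) in Hc.
    apply Rabs_def2 in Hc. apply HP; lra.
Qed.

Lemma at_upper_near (b : option R) (P : R -> Prop) :
  at_upper b P <-> exists delta M, 0 < delta /\ forall d, near_upper b delta M d -> P d.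
Proof.
  destruct b as [B|]; simpl; split.
  - intros [eps HP]. exists eps, 0; split; [apply cond_pos|].
    intros d Hd. apply HP; [|lra]. change (Rabs (d - B) < eps). apply Rabs_def1; lra.
  - intros [delta [_ [Hdelta HP]]]. exists (mkposreal delta Hdelta).
    intros d Hd HdB. change (Rabs (d - B) < delta) in Hd.
    apply Rabs_def2 in Hd. apply HP; lra.
  - intros [M HP]. exists 1, M; split; [lra|exact HP].
  - intros [_ [M [_ HP]]]. exists M. exact HP.
Qed.

Lemma near_upper_le (b : option R) (delta delta' M d : R) :
  delta <= delta' -> near_upper b delta M d -> near_upper b delta' M d.
Proof. destruct b; simpl; lra. Qed.

Lemma below_upper_le (b : option R) (x y : R) :
  x <= y -> below_upper b y -> below_upper b x.
Proof. destruct b; simpl; lra. Qed.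

Lemma below_upper_between (b : option R) (c d x : R) :
  below_upper b c -> below_upper b d -> Rmin c d <= x <= Rmax c d -> below_upper b x.
Proof.
  intros Hc Hd Hx. apply below_upper_le with (Rmax c d); [lra|].
  unfold Rmax; destruct Rle_dec; assumption.
Qed.

Lemma locally_below_upper (b : option R) (y : R) :
  below_upper b y -> locally y (below_upper b).
Proof.
  destruct b as [B|]; simpl; intros H; [exact (open_lt B y H) | now apply filter_forall].
Qed.

Lemma at_upper_domain (b : option R) (u : R) :
  below_upper b u -> at_upper b (fun d => u < d /\ below_upper b d).
Proof.
  intros Hu. apply at_upper_near. destruct b as [B|]; simpl in *.
  - exists (B - u), 0. split; [lra|]. intros d Hd; lra.
  - exists 1, u. split; [lra|]. auto.
Qed.

Lemma at_right_domain (b : option R) (a : R) :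
  below_upper b a -> at_right a (fun c => a < c /\ below_upper b c).
Proof.
  intros Ha. apply at_right_near. destruct b as [B|]; simpl in *.
  - exists (B - a). split; [lra|]. intros c Hc; lra.
  - exists 1. split; [lra|]. intros c Hc; split; [lra|exact I].
Qed.

Section RealLimits.
Context {T : Type} {F : (T -> Prop) -> Prop} {FF : Filter F}.

Lemma filterlim_locally_Rabs (f : T -> R) (l : R) :
  filterlim f F (locally l) <-> forall eps, 0 < eps -> F (fun x => Rabs (f x - l) < eps).
Proof.
  rewrite filterlim_locally. split.
  - intros H eps Heps. exact (H (mkposreal eps Heps)).
  - intros H eps. apply H, cond_pos.
Qed.

Lemma filterlim_Rplus (f g : T -> R) (lf lg : R) :
  filterlim f F (locally lf) -> filterlim g F (locally lg) ->
  filterlim (fun x => f x + g x) F (locally (lf + lg)).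
Proof. intros Hf Hg. exact (filterlim_comp_2 _ _ _ Hf Hg (filterlim_plus lf lg)). Qed.

Lemma filterlim_Rmult (f g : T -> R) (lf lg : R) :
  filterlim f F (locally lf) -> filterlim g F (locally lg) ->
  filterlim (fun x => f x * g x) F (locally (lf * lg)).
Proof. intros Hf Hg. exact (filterlim_comp_2 _ _ _ Hf Hg (filterlim_mult lf lg)). Qed.

Lemma filterlim_Ropp (f : T -> R) (l : R) :
  filterlim f F (locally l) -> filterlim (fun x => - f x) F (locally (- l)).
Proof. intros Hf. exact (filterlim_comp _ _ _ _ _ _ _ _ Hf (filterlim_opp l)). Qed.

Lemma filterlim_Rminus (f g : T -> R) (lf lg : R) :
  filterlim f F (locally lf) -> filterlim g F (locally lg) ->
  filterlim (fun x => f x - g x) F (locally (lf - lg)).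
Proof. intros Hf Hg. apply filterlim_Rplus; [exact Hf | now apply filterlim_Ropp]. Qed.

Lemma filterlim_within (f : T -> R) (L : R) (D : R -> Prop) :
  filterlim f F (locally L) -> F (fun y => D (f y)) -> filterlim f F (within D (locally L)).
Proof.
  intros Hf HD P HP. apply filter_imp with (2 := filter_and _ _ (Hf _ HP) HD).
  intros y [H1 H2]. exact (H1 H2).
Qed.

End RealLimits.

Lemma continuous_at_right (f : R -> R) (a : R) :
  continuous f a -> filterlim f (at_right a) (locally (f a)).
Proof. apply filterlim_filter_le_1, filter_le_within. Qed.

Lemma continuous_at_left (f : R -> R) (a : R) :
  continuous f a -> filterlim f (at_left a) (locally (f a)).
Proof. apply filterlim_filter_le_1, filter_le_within. Qed.

Lemma RInt_antiderivative (g F : R -> R) (c d : R) :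
  (forall x, Rmin c d <= x <= Rmax c d -> is_derive F x (g x) /\ continuous g x) ->
  ex_RInt g c d /\ RInt g c d = F d - F c.
Proof.
  intros H.
  pose proof (is_RInt_derive F g c d (fun x Hx => proj1 (H x Hx))
                              (fun x Hx => proj2 (H x Hx))) as HI.
  split; [eexists; exact HI | exact (is_RInt_unique _ _ _ _ HI)].
Qed.

Lemma ex_derive_R_continuous (f : R -> R) (x : R) : ex_derive f x -> continuous f x.
Proof. apply (ex_derive_continuous (K := R_AbsRing) (V := R_NormedModule)). Qed.

Lemma is_derive_continuous (f : R -> R) (x l : R) : is_derive f x l -> continuous f x.
Proof. intros H. apply ex_derive_R_continuous. now exists l. Qed.


Lemma has_improper_integral_antiderivative (g F : R -> R) (a : R) (b : option R) (La Lb : R) :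
  below_upper b a ->
  (forall x, a < x -> below_upper b x -> is_derive F x (g x) /\ continuous g x) ->
  filterlim F (at_right a) (locally La) -> filterlim F (at_upper b) (locally Lb) ->
  has_improper_integral g a b (Lb - La).
Proof.
  intros Ha HD HL HU.
  assert (HI : forall c d, a < c -> below_upper b c -> a < d -> below_upper b d ->
                 ex_RInt g c d /\ RInt g c d = F d - F c).
  { intros c d Hac Hc Had Hd. apply RInt_antiderivative. intros x Hx. apply HD.
    - apply Rlt_le_trans with (Rmin c d); [now apply Rmin_glb_lt | apply Hx].
    - exact (below_upper_between b c d x Hc Hd Hx). }
  split.
  - intros c d Hac Hcd Hd. constructor. apply ex_RInt_Reals_0.
    apply HI; try lra; [exact (below_upper_le b c d Hcd Hd) | exact Hd].
  - intros eps Heps.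
    apply filterlim_locally_Rabs with (eps := eps / 2) in HL; [|lra].
    apply filterlim_locally_Rabs with (eps := eps / 2) in HU; [|lra].
    destruct (proj1 (at_right_near _ _) (filter_and _ _ (at_right_domain b a Ha) HL))
      as [delta1 [Hdelta1 Hc]].
    destruct (proj1 (at_upper_near _ _) (filter_and _ _ (at_upper_domain b a Ha) HU))
      as [delta2 [M [Hdelta2 Hd]]].
    exists (Rmin delta1 delta2), M. split; [now apply Rmin_pos|].
    intros c d pr Hac Hnear.
    destruct (Hc c) as [[Hac' Hbc] HFc]; [pose proof (Rmin_l delta1 delta2); lra|].
    destruct (Hd d) as [[Had Hbd] HFd];
      [exact (near_upper_le b _ _ M d (Rmin_r delta1 delta2) Hnear)|].
    rewrite <- RInt_Reals, (proj2 (HI c d Hac' Hbc Had Hbd)).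
    apply Rabs_def2 in HFc. apply Rabs_def2 in HFd. apply Rabs_def1; lra.
Qed.

Lemma filterlim_upper_monotone_bounded (S : R -> R) (b : option R) (u K : R) :
  below_upper b u ->
  (forall y1 y2, u <= y1 <= y2 -> below_upper b y2 -> S y1 <= S y2) ->
  (forall y, u <= y -> below_upper b y -> S y <= K) ->
  exists L : R, filterlim S (at_upper b) (locally L).
Proof.
  intros Hu Hmono HK.
  set (E := fun z => exists y, u <= y /\ below_upper b y /\ z = S y).
  destruct (completeness E) as [L [Hub Hlub]].
  - exists K. intros z [y [Hy [Hb ->]]]. now apply HK.
  - exists (S u), u. repeat split; [lra | exact Hu].
  - exists L. apply filterlim_locally_Rabs. intros eps Heps.
    assert (Hy0 : exists y0, u <= y0 /\ below_upper b y0 /\ L - eps < S y0).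
    { apply NNPP. intros Hn.
      enough (L <= L - eps) by lra.
      apply Hlub. intros z [y [Hy [Hb ->]]].
      apply Rnot_lt_le. intros Hlt. apply Hn. now exists y. }
    destruct Hy0 as [y0 [Hy0 [Hb0 HS0]]].
    apply filter_imp with (2 := at_upper_domain b y0 Hb0).
    intros d [Hd Hbd].
    assert (S y0 <= S d) by (apply Hmono; [lra | exact Hbd]).
    assert (S d <= L) by (apply Hub; exists d; repeat split; [lra | exact Hbd]).
    apply Rabs_def1; lra.
Qed.

Lemma has_improper_integral_reversed_substitution (S g phi : R -> R) (b : option R) (x Sinf : R) :
  0 < x ->
  (forall t, 0 < t <= x -> is_derive (fun t => - S (phi t)) t (g t) /\ continuous g t) ->
  S (phi x) = 0 ->
  filterlim phi (at_right 0) (at_upper b) ->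
  filterlim S (at_upper b) (locally Sinf) ->
  has_improper_integral g 0 (Some x) Sinf.
Proof.
  intros Hx HD Hend Hphi HS.
  replace Sinf with (- S (phi x) - - Sinf) by (rewrite Hend; ring).
  apply (has_improper_integral_antiderivative _ (fun t => - S (phi t))); [exact Hx | | |].
  - intros t Ht Htx. apply HD. simpl in Htx. lra.
  - exact (filterlim_Ropp _ _ (filterlim_comp _ _ _ _ _ _ _ _ Hphi HS)).
  - apply (continuous_at_left (fun t => - S (phi t))), (is_derive_continuous _ x (g x)), HD. lra.
Qed.


(** * Integrals of a survival function *)

Section SurvivalIntegral.
Variables (b : option R) (s : R -> R) (u : R).
Hypothesis s_continuous : forall y, below_upper b y -> continuous s y.
Hypothesis u_below : below_upper b u.

Lemma ex_RInt_below_upper (x y : R) :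
  below_upper b x -> below_upper b y -> ex_RInt s x y.
Proof.
  intros Hx Hy. apply (ex_RInt_continuous (V := R_CompleteNormedModule)). intros z Hz.
  exact (s_continuous z (below_upper_between b x y z Hx Hy Hz)).
Qed.

Lemma is_derive_RInt_below_upper (y : R) :
  below_upper b y -> is_derive (RInt s u) y (s y).
Proof.
  intros Hy. apply (is_derive_RInt s (RInt s u) u y); [|exact (s_continuous y Hy)].
  apply filter_imp with (2 := locally_below_upper b y Hy).
  intros z Hz. apply (RInt_correct (V := R_CompleteNormedModule)).
  exact (ex_RInt_below_upper u z u_below Hz).
Qed.

Lemma RInt_nonneg_monotone :
  (forall y, below_upper b y -> 0 <= s y) ->
  forall y1 y2, u <= y1 <= y2 -> below_upper b y2 -> RInt s u y1 <= RInt s u y2.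
Proof.
  intros Hs y1 y2 Hy Hb2.
  assert (Hb1 : below_upper b y1) by exact (below_upper_le b y1 y2 (proj2 Hy) Hb2).
  rewrite <- (RInt_Chasles s u y1 y2) by
    (apply ex_RInt_below_upper; assumption).
  assert (0 <= RInt s y1 y2); [|change (plus ?x ?y) with (x + y); lra].
  apply RInt_ge_0; [lra | now apply ex_RInt_below_upper |].
  intros x Hx. apply Hs, (below_upper_le b x y2); [lra | exact Hb2].
Qed.

End SurvivalIntegral.

Lemma mean_excess_integrals (b : option R) (s pdf : R -> R) (u : R) :
  below_upper b u ->
  (forall y, below_upper b y -> is_derive s y (- pdf y)) ->
  (forall y, below_upper b y -> continuous pdf y) ->
  (forall y, below_upper b y -> 0 <= s y) ->
  (exists K, forall y, u <= y -> below_upper b y -> RInt s u y <= K) ->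
  filterlim s (at_upper b) (locally 0) ->
  filterlim (fun y => (y - u) * s y) (at_upper b) (locally 0) ->
  exists Sinf : R, filterlim (RInt s u) (at_upper b) (locally Sinf) /\
    has_improper_integral (fun y => (y - u) * pdf y) u b Sinf /\
    has_improper_integral (fun y => y * pdf y) u b (Sinf + u * s u).
Proof.
  intros Hu Hs Hpdf Hs0 [K HK] Hlim_s Hlim_ys.
  assert (Hs_cont : forall y, below_upper b y -> continuous s y).
  { intros y Hy. apply (is_derive_continuous s y (- pdf y)). now apply Hs. }
  destruct (filterlim_upper_monotone_bounded (RInt s u) b u K Hu
              (RInt_nonneg_monotone b s u Hs_cont Hu Hs0) HK) as [Sinf HS].
  exists Sinf. split; [exact HS|].
  set (S := RInt s u) in *.
  assert (S_u : S u = 0) by exact (RInt_point u s).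
  set (G := fun y => S y - (y - u) * s y).
  assert (DG : forall y, below_upper b y -> is_derive G y ((y - u) * pdf y)).
  { intros y Hy.
    replace ((y - u) * pdf y) with (s y - (1 * s y + (y - u) * - pdf y)) by ring.
    apply (is_derive_minus S); [exact (is_derive_RInt_below_upper b s u Hs_cont Hu y Hy)|].
    apply (is_derive_mult (fun y => y - u) s); [| now apply Hs | exact Rmult_comm].
    auto_derive; [exact I | ring]. }
  assert (G_lower : filterlim G (at_right u) (locally (G u))).
  { apply continuous_at_right, (is_derive_continuous G u ((u - u) * pdf u)). now apply DG. }
  assert (G_upper : filterlim G (at_upper b) (locally (Sinf - 0))).
  { exact (filterlim_Rminus _ _ _ _ HS Hlim_ys). }
  split.
  - replace Sinf with (Sinf - 0 - G u) by (unfold G; rewrite S_u; ring).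
    apply (has_improper_integral_antiderivative _ G); [exact Hu | | exact G_lower | exact G_upper].
    intros x _ Hx. split; [now apply DG|].
    apply (continuous_mult (fun y => y - u)); [|now apply Hpdf].
    apply (is_derive_continuous _ x 1). auto_derive; [exact I | ring].
  - replace (Sinf + u * s u) with (Sinf - 0 - u * 0 - (G u - u * s u))
      by (unfold G; rewrite S_u; ring).
    apply (has_improper_integral_antiderivative _ (fun y => G y - u * s y)); [exact Hu | | |].
    + intros x _ Hx. split.
      * replace (x * pdf x) with ((x - u) * pdf x - u * - pdf x) by ring.
        apply (is_derive_minus G); [now apply DG|].
        apply (is_derive_scal s); now apply Hs.
      * apply (continuous_mult (fun y => y) pdf); [apply continuous_id | now apply Hpdf].
    + apply (filterlim_Rminus G (fun y => u * s y)); [exact G_lower|].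
      apply (continuous_at_right (fun y => u * s y)), (continuous_mult (fun _ => u) s);
        [apply continuous_const | now apply Hs_cont].
    + apply filterlim_Rminus; [exact G_upper|].
      apply (filterlim_Rmult (fun _ => u)); [apply filterlim_const | exact Hlim_s].
Qed.

Lemma exp_decay_p_infty (k c : R) :
  0 < k -> filterlim (fun y => (y - c) * exp (- (k * y))) (Rbar_locally p_infty) (locally 0).
Proof.
  intros Hk.
  (* [(y - c) e^(-k y) = e^(-k c) / k * (- z e^z)] with [z = - k (y - c) -> -oo] *)
  assert (Hz : is_lim (fun y => - (k * (y - c))) p_infty m_infty).
  { assert (H := is_lim_scal_l (fun y => y - c) k p_infty p_infty).
    apply is_lim_opp in H;
      [|eapply is_lim_minus; [apply is_lim_id | apply is_lim_const | constructor]].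
    revert H. simpl. destruct Rle_dec; [|lra]. destruct Rle_lt_or_eq_dec; [easy|lra]. }
  assert (H := is_lim_comp _ _ _ _ _ is_lim_mul_exp_m Hz
                 ltac:(exists 0; intros y _; discriminate)).
  apply is_lim_opp, (is_lim_scal_l _ (exp (- (k * c)) / k)) in H. simpl in H.
  rewrite Ropp_0, Rmult_0_r in H.
  eapply filterlim_ext; [|exact H]. intros y. simpl.
  replace (- (k * (y - c))) with (- (k * y) + k * c) by ring.
  rewrite exp_plus, (exp_Ropp (k * c)). field. split; [apply Rgt_not_eq, exp_pos | lra].
Qed.

Lemma exp_tail_conditions (s : R -> R) (C k u : R) :
  0 < k -> (forall y, continuous s y) -> (forall y, 0 <= s y <= C * exp (- (k * y))) ->
  (exists K, forall y, u <= y -> RInt s u y <= K) /\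
  filterlim s (Rbar_locally p_infty) (locally 0) /\
  filterlim (fun y => (y - u) * s y) (Rbar_locally p_infty) (locally 0).
Proof.
  intros Hk Hs_cont Hs.
  assert (HC : 0 <= C) by (destruct (Hs 0) as [H0 H1]; rewrite Rmult_0_r, Ropp_0, exp_0 in H1; lra).
  assert (Hdecay : filterlim (fun y => C * ((y - u) * exp (- (k * y))))
                     (Rbar_locally p_infty) (locally 0)).
  { rewrite <- (Rmult_0_r C).
    exact (filterlim_Rmult _ _ _ _ (filterlim_const C) (exp_decay_p_infty k u Hk)). }
  split; [|split].
  - exists (C / k * exp (- (k * u))). intros y Hy.
    destruct (RInt_antiderivative (fun x => C * exp (- (k * x)))
                (fun x => - (C / k) * exp (- (k * x))) u y) as [Hex Heq].
    { intros x _. split; [auto_derive; [exact I | field; lra]|].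
      apply (is_derive_continuous _ x (- k * (C * exp (- (k * x))))).
      auto_derive; [exact I | ring]. }
    apply Rle_trans with (RInt (fun x => C * exp (- (k * x))) u y).
    + apply RInt_le; [exact Hy | | exact Hex | intros x _; apply Hs].
      apply (ex_RInt_continuous (V := R_CompleteNormedModule)). intros z _. apply Hs_cont.
    + rewrite Heq. assert (0 <= C / k * exp (- (k * y))); [|lra].
      apply Rmult_le_pos; [apply Rdiv_le_0_compat; lra | left; apply exp_pos].
  - apply (filterlim_le_le (fun _ => 0) s (fun y => C * ((y - u) * exp (- (k * y)))) 0);
      [| apply filterlim_const | exact Hdecay].
    exists (u + 1). intros y Hy. destruct (Hs y) as [H0 H1]. split; [exact H0|].
    assert (0 < exp (- (k * y))) by apply exp_pos. nra.
  - apply (filterlim_le_le (fun _ => 0) _ (fun y => C * ((y - u) * exp (- (k * y)))) 0);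
      [| apply filterlim_const | exact Hdecay].
    exists u. intros y Hy. destruct (Hs y) as [H0 H1]. split; [nra|].
    assert (0 < exp (- (k * y))) by apply exp_pos. nra.
Qed.

Lemma Rpower_minus_1 (t a : R) : 0 < t -> Rpower t (a - 1) = Rpower t a / t.
Proof.
  intros Ht. unfold Rpower, Rminus.
  rewrite Rmult_plus_distr_r, exp_plus, Ropp_mult_distr_l_reverse, Rmult_1_l, exp_Ropp,
    exp_ln by exact Ht.
  reflexivity.
Qed.

Lemma Rpower_lim_0 (p : R) : 0 < p -> filterlim (fun x => Rpower x p) (at_right 0) (locally 0).
Proof.
  intros Hp. apply filterlim_locally_Rabs. intros eps Heps. apply at_right_near.
  exists (exp (ln eps / p)). split; [apply exp_pos|]. intros x Hx.
  rewrite Rminus_0_r, Rabs_right by (left; apply exp_pos).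
  rewrite <- (exp_ln eps) by exact Heps. apply exp_increasing.
  assert (ln x < ln eps / p) by (rewrite <- (ln_exp (ln eps / p)); apply ln_increasing; lra).
  apply (Rmult_lt_compat_l p) in H; [|exact Hp].
  replace (p * (ln eps / p)) with (ln eps) in H by (field; lra). exact H.
Qed.

(** * The exponentiated generalized Pareto distribution *)

Section ExGPD.
Variables (sigma xi : R).
Hypothesis sigma_pos : 0 < sigma.

Lemma exgpd_sf_nonzero (y : R) :
  xi <> 0 -> exgpd_sf sigma xi y = Rpower (1 + xi * exp y / sigma) (- / xi).
Proof. intros Hxi. unfold exgpd_sf. now destruct (Req_EM_T xi 0). Qed.

Lemma exgpd_sf_zero (y : R) : xi = 0 -> exgpd_sf sigma xi y = exp (- (exp y / sigma)).
Proof. intros Hxi. unfold exgpd_sf. now destruct (Req_EM_T xi 0). Qed.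

Lemma exgpd_upper_nonneg : 0 <= xi -> exgpd_upper sigma xi = None.
Proof. intros Hxi. unfold exgpd_upper. destruct (Rlt_dec xi 0); [lra | reflexivity]. Qed.

Lemma exgpd_upper_neg : xi < 0 -> exgpd_upper sigma xi = Some (ln (- sigma / xi)).
Proof. intros Hxi. unfold exgpd_upper. destruct (Rlt_dec xi 0); [reflexivity | lra]. Qed.

Lemma below_exgpd_upper (y : R) :
  (xi < 0 -> y < ln (- sigma / xi)) -> below_upper (exgpd_upper sigma xi) y.
Proof. unfold exgpd_upper. destruct (Rlt_dec xi 0); simpl; auto. Qed.

Lemma exgpd_base_pos (y : R) :
  below_upper (exgpd_upper sigma xi) y -> 0 < 1 + xi * exp y / sigma.
Proof.
  intros Hy. pose proof (exp_pos y) as Hey.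
  destruct (Rlt_dec xi 0) as [Hxi|Hxi].
  - rewrite exgpd_upper_neg in Hy by exact Hxi. simpl in Hy.
    assert (Hq : 0 < - sigma / xi).
    { replace (- sigma / xi) with (sigma / - xi) by (field; lra). apply Rdiv_lt_0_compat; lra. }
    apply exp_increasing in Hy. rewrite exp_ln in Hy by exact Hq.
    assert (xi * (- sigma / xi) = - sigma) by (field; lra).
    replace (1 + xi * exp y / sigma) with ((sigma + xi * exp y) / sigma) by (field; lra).
    apply Rdiv_lt_0_compat; nra.
  - assert (0 <= xi * exp y / sigma); [|lra].
    apply Rdiv_le_0_compat; [nra | exact sigma_pos].
Qed.

Lemma exgpd_sf_pos (y : R) : 0 < exgpd_sf sigma xi y.
Proof. unfold exgpd_sf, Rpower. destruct (Req_EM_T xi 0); apply exp_pos. Qed.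

Lemma exgpd_sf_derive (y : R) :
  below_upper (exgpd_upper sigma xi) y ->
  is_derive (exgpd_sf sigma xi) y (- exgpd_pdf sigma xi y).
Proof.
  intros Hy. pose proof (exgpd_base_pos y Hy) as Hw.
  unfold exgpd_sf, exgpd_pdf, Rpower. destruct (Req_EM_T xi 0).
  - auto_derive; [exact I|]. rewrite Rminus_def, exp_plus. unfold Rdiv. ring.
  - auto_derive; [exact Hw|].
    replace ((- / xi - 1) * ln (1 + xi * exp y / sigma))
      with (- / xi * ln (1 + xi * exp y / sigma) + - ln (1 + xi * exp y / sigma)) by ring.
    rewrite exp_plus, exp_Ropp, exp_ln by exact Hw.
    assert (0 < sigma + xi * exp y).
    { replace (sigma + xi * exp y) with (sigma * (1 + xi * exp y / sigma)) by (field; lra). nra. }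
    unfold Rdiv. field. repeat split; lra.
Qed.

Lemma exgpd_sf_continuous (y : R) :
  below_upper (exgpd_upper sigma xi) y -> continuous (exgpd_sf sigma xi) y.
Proof. intros Hy. exact (is_derive_continuous _ _ _ (exgpd_sf_derive y Hy)). Qed.

Lemma exgpd_pdf_continuous (y : R) :
  below_upper (exgpd_upper sigma xi) y -> continuous (exgpd_pdf sigma xi) y.
Proof.
  intros Hy. pose proof (exgpd_base_pos y Hy) as Hw. apply ex_derive_R_continuous.
  unfold exgpd_pdf, Rpower. destruct (Req_EM_T xi 0); auto_derive; [exact I | exact Hw].
Qed.

Lemma exgpd_RInt_sf_derive (u y : R) :
  below_upper (exgpd_upper sigma xi) u -> below_upper (exgpd_upper sigma xi) y ->
  is_derive (RInt (exgpd_sf sigma xi) u) y (exgpd_sf sigma xi y).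
Proof. intros Hu. exact (is_derive_RInt_below_upper _ _ u exgpd_sf_continuous Hu y). Qed.

Lemma exgpd_sf_le_exp_pos (y : R) :
  0 < xi -> exgpd_sf sigma xi y <= Rpower (xi / sigma) (- / xi) * exp (- (/ xi * y)).
Proof.
  intros Hxi. rewrite exgpd_sf_nonzero by lra. unfold Rpower. rewrite <- exp_plus.
  left. apply exp_increasing.
  assert (Hq : 0 < xi / sigma) by (apply Rdiv_lt_0_compat; lra).
  assert (Hl : ln (xi / sigma * exp y) < ln (1 + xi * exp y / sigma)).
  { apply ln_increasing; [apply Rmult_lt_0_compat; [exact Hq | apply exp_pos]|].
    unfold Rdiv. lra. }
  rewrite ln_mult, ln_exp in Hl by (exact Hq || apply exp_pos).
  assert (0 < / xi) by (apply Rinv_0_lt_compat; exact Hxi). nra.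
Qed.

Lemma exgpd_sf_le_exp_zero (y : R) :
  xi = 0 -> exgpd_sf sigma xi y <= sigma * exp (- (1 * y)).
Proof.
  intros Hxi. rewrite exgpd_sf_zero by exact Hxi.
  set (z := exp y / sigma).
  assert (Hz : 0 < z) by (apply Rdiv_lt_0_compat; [apply exp_pos | exact sigma_pos]).
  pose proof (exp_ineq1 z (Rgt_not_eq _ _ Hz)).
  rewrite Rmult_1_l, !exp_Ropp.
  replace (sigma * / exp y) with (/ z)
    by (unfold z; field; split; [apply Rgt_not_eq, exp_pos | lra]).
  left. apply Rinv_lt_contravar; nra.
Qed.

Lemma exgpd_sf_le_1 (y : R) :
  xi < 0 -> below_upper (exgpd_upper sigma xi) y -> exgpd_sf sigma xi y <= 1.
Proof.
  intros Hxi Hy. rewrite exgpd_sf_nonzero by lra.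
  replace 1 with (Rpower 1 (- / xi)) at 2
    by (unfold Rpower; rewrite ln_1, Rmult_0_r; apply exp_0).
  apply Rle_Rpower_l.
  - assert (/ xi < 0) by (apply Rinv_lt_0_compat; exact Hxi). lra.
  - split; [exact (exgpd_base_pos y Hy)|].
    assert (xi * exp y / sigma <= 0); [|lra].
    unfold Rdiv. assert (0 < / sigma) by (apply Rinv_0_lt_compat; exact sigma_pos).
    pose proof (exp_pos y). assert (xi * exp y < 0) by nra. nra.
Qed.

Lemma exgpd_sf_lim_upper_neg :
  xi < 0 -> filterlim (exgpd_sf sigma xi) (at_left (ln (- sigma / xi))) (locally 0).
Proof.
  intros Hxi.
  assert (Hq : 0 < - sigma / xi).
  { replace (- sigma / xi) with (sigma / - xi) by (field; lra). apply Rdiv_lt_0_compat; lra. }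
  set (w := fun y => 1 + xi * exp y / sigma).
  (* the GPD base [w] vanishes at the upper end of the support *)
  assert (Hw : filterlim w (at_left (ln (- sigma / xi))) (at_right 0)).
  { apply filterlim_within.
    - replace 0 with (w (ln (- sigma / xi))) by (unfold w; rewrite exp_ln by exact Hq; field; lra).
      apply continuous_at_left, ex_derive_R_continuous. unfold w. auto_derive. exact I.
    - exists (mkposreal _ Rlt_0_1). intros y _ Hy. apply exgpd_base_pos.
      rewrite exgpd_upper_neg by exact Hxi. exact Hy. }
  assert (Hp : 0 < - / xi) by (assert (/ xi < 0) by (apply Rinv_lt_0_compat; exact Hxi); lra).
  eapply filterlim_ext; [|exact (filterlim_comp _ _ _ _ _ _ _ _ Hw (Rpower_lim_0 _ Hp))].
  intros y. symmetry. apply exgpd_sf_nonzero. lra.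
Qed.

Lemma exgpd_sf_exp_tail :
  0 <= xi -> exists C k, 0 < k /\ forall y, exgpd_sf sigma xi y <= C * exp (- (k * y)).
Proof.
  intros [Hxi|Hxi].
  - exists (Rpower (xi / sigma) (- / xi)), (/ xi). split; [now apply Rinv_0_lt_compat|].
    intros y. now apply exgpd_sf_le_exp_pos.
  - exists sigma, 1. split; [exact Rlt_0_1|]. intros y. now apply exgpd_sf_le_exp_zero.
Qed.

Lemma exgpd_tail_conditions (u : R) :
  below_upper (exgpd_upper sigma xi) u ->
  (exists K, forall y, u <= y -> below_upper (exgpd_upper sigma xi) y ->
     RInt (exgpd_sf sigma xi) u y <= K) /\
  filterlim (exgpd_sf sigma xi) (at_upper (exgpd_upper sigma xi)) (locally 0) /\
  filterlim (fun y => (y - u) * exgpd_sf sigma xi y) (at_upper (exgpd_upper sigma xi)) (locally 0).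
Proof.
  intros Hu. destruct (Rlt_le_dec xi 0) as [Hxi|Hxi].
  - pose proof (exgpd_upper_neg Hxi) as Hupper.
    set (B := ln (- sigma / xi)) in Hupper.
    split; [|rewrite Hupper; split].
    + exists (B - u). intros y Hy Hb.
      apply Rle_trans with (RInt (fun _ => 1) u y).
      * apply RInt_le; [exact Hy | | apply ex_RInt_const |].
        -- apply (ex_RInt_below_upper _ _ exgpd_sf_continuous); assumption.
        -- intros x Hx. apply exgpd_sf_le_1; [exact Hxi|].
           apply (below_upper_le _ x y); [lra | exact Hb].
      * rewrite RInt_const, Hupper in *. simpl in Hb.
        change (scal (y - u) 1) with ((y - u) * 1). lra.
    + exact (exgpd_sf_lim_upper_neg Hxi).
    + replace 0 with ((B - u) * 0) by ring.
      apply filterlim_Rmult; [|exact (exgpd_sf_lim_upper_neg Hxi)].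
      apply (continuous_at_left (fun y => y - u)), ex_derive_R_continuous. auto_derive. exact I.
  - destruct (exgpd_sf_exp_tail Hxi) as [C [k [Hk Hle]]].
    rewrite exgpd_upper_nonneg by exact Hxi.
    destruct (exp_tail_conditions (exgpd_sf sigma xi) C k u Hk) as [[K HK] Hlim].
    + intros y. apply exgpd_sf_continuous. rewrite exgpd_upper_nonneg by exact Hxi. exact I.
    + intros y. split; [left; apply exgpd_sf_pos | apply Hle].
    + split; [|exact Hlim]. exists K. intros y Hy _. now apply HK.
Qed.

Lemma exgpd_excess_integrals (u : R) :
  below_upper (exgpd_upper sigma xi) u ->
  exists Sinf : R,
    filterlim (RInt (exgpd_sf sigma xi) u) (at_upper (exgpd_upper sigma xi)) (locally Sinf) /\
    is_mean_excess sigma xi u (Sinf / exgpd_sf sigma xi u) /\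
    is_cond_tail_exp sigma xi u (u + Sinf / exgpd_sf sigma xi u).
Proof.
  intros Hu. destruct (exgpd_tail_conditions u Hu) as [HK [Hlim_s Hlim_ys]].
  destruct (mean_excess_integrals _ _ (exgpd_pdf sigma xi) u Hu exgpd_sf_derive
              exgpd_pdf_continuous (fun y _ => Rlt_le _ _ (exgpd_sf_pos y)) HK Hlim_s Hlim_ys)
    as [Sinf [HS [Hexcess Htail]]].
  exists Sinf. split; [exact HS|].
  pose proof (exgpd_sf_pos u) as Hsu.
  unfold is_mean_excess, is_cond_tail_exp. split.
  - replace (Sinf / exgpd_sf sigma xi u * exgpd_sf sigma xi u) with Sinf by (field; lra).
    exact Hexcess.
  - replace ((u + Sinf / exgpd_sf sigma xi u) * exgpd_sf sigma xi u)
      with (Sinf + u * exgpd_sf sigma xi u) by (field; lra).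
    exact Htail.
Qed.

Lemma exgpd_sf_pos_substitution (t : R) :
  0 < xi -> 0 < t < 1 -> exgpd_sf sigma xi (ln (sigma / xi * (/ t - 1))) = Rpower t (/ xi).
Proof.
  intros Hxi Ht. assert (1 < / t) by (rewrite <- Rinv_1; apply Rinv_lt_contravar; lra).
  assert (0 < sigma / xi * (/ t - 1))
    by (apply Rmult_lt_0_compat; [apply Rdiv_lt_0_compat|]; lra).
  rewrite exgpd_sf_nonzero, exp_ln by lra.
  replace (1 + xi * (sigma / xi * (/ t - 1)) / sigma) with (/ t) by (field; lra).
  unfold Rpower. rewrite ln_Rinv by lra. f_equal. ring.
Qed.

Lemma exgpd_base_gt_1 (y : R) : 0 < xi -> 1 < 1 + xi * exp y / sigma.
Proof.
  intros Hxi. assert (0 < xi * exp y / sigma); [|lra].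
  apply Rdiv_lt_0_compat; [apply Rmult_lt_0_compat; [exact Hxi | apply exp_pos] | exact sigma_pos].
Qed.

Lemma exgpd_pos_substitution_lim :
  0 < xi -> filterlim (fun t => ln (sigma / xi * (/ t - 1))) (at_right 0) (Rbar_locally p_infty).
Proof.
  intros Hxi P [M HP]. apply at_right_near.
  set (W := 1 + xi * exp M / sigma).
  pose proof (exgpd_base_gt_1 M Hxi) as HW. fold W in HW.
  exists (/ W). split; [apply Rinv_0_lt_compat; lra|].
  intros t Ht. apply HP. rewrite <- (ln_exp M) at 1. apply ln_increasing; [apply exp_pos|].
  assert (W < / t)
    by (rewrite <- (Rinv_inv W); apply Rinv_lt_contravar; [apply Rmult_lt_0_compat|]; lra).
  replace (exp M) with (sigma / xi * (W - 1)) by (unfold W; field; lra).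
  apply Rmult_lt_compat_l; [apply Rdiv_lt_0_compat|]; lra.
Qed.

Lemma exgpd_incBeta_pos (u Sinf : R) :
  0 < xi ->
  filterlim (RInt (exgpd_sf sigma xi) u) (at_upper (exgpd_upper sigma xi)) (locally Sinf) ->
  is_incBeta0 (/ (1 + xi * exp u / sigma)) (/ xi) Sinf.
Proof.
  intros Hxi HS.
  pose proof (exgpd_upper_nonneg (Rlt_le _ _ Hxi)) as Hupper.
  assert (Hbelow : forall y, below_upper (exgpd_upper sigma xi) y)
    by (intros y; rewrite Hupper; exact I).
  rewrite Hupper in HS.
  assert (Hq : 0 < sigma / xi) by (apply Rdiv_lt_0_compat; lra).
  set (W := 1 + xi * exp u / sigma).
  assert (Hx : 0 < / W < 1).
  { pose proof (exgpd_base_gt_1 u Hxi) as HW. fold W in HW.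
    split; [apply Rinv_0_lt_compat | rewrite <- Rinv_1; apply Rinv_lt_contravar]; lra. }
  set (S := RInt (exgpd_sf sigma xi) u) in HS |- *.
  set (phi := fun t => ln (sigma / xi * (/ t - 1))).
  apply (has_improper_integral_reversed_substitution S _ phi None); [lra | | | | exact HS].
  - intros t Ht. assert (1 < / t) by (rewrite <- Rinv_1; apply Rinv_lt_contravar; lra).
    split.
    + replace (Rpower t (/ xi - 1) / (1 - t))
        with (- (- / (t * (1 - t)) * exgpd_sf sigma xi (phi t))).
      * apply (is_derive_opp (fun t => S (phi t))), (is_derive_comp S phi);
          [now apply exgpd_RInt_sf_derive|].
        unfold phi. auto_derive; [repeat split; try lra; apply Rmult_lt_0_compat; lra |].
        field. repeat split; lra.
      * unfold phi. rewrite exgpd_sf_pos_substitution, Rpower_minus_1 by lra. field. lra.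
    + apply ex_derive_R_continuous. unfold Rpower. auto_derive. repeat split; lra.
  - unfold phi, W. rewrite Rinv_inv.
    replace (sigma / xi * (1 + xi * exp u / sigma - 1)) with (exp u) by (field; lra).
    rewrite ln_exp. exact (RInt_point u (exgpd_sf sigma xi)).
  - exact (exgpd_pos_substitution_lim Hxi).
Qed.

Lemma exgpd_sf_neg_substitution (t : R) :
  xi < 0 -> 0 < t < 1 -> exgpd_sf sigma xi (ln (sigma / xi * (t - 1))) = Rpower t (- / xi).
Proof.
  intros Hxi Ht.
  assert (0 < sigma / xi * (t - 1)).
  { replace (sigma / xi * (t - 1)) with (sigma / - xi * (1 - t)) by (field; lra).
    apply Rmult_lt_0_compat; [apply Rdiv_lt_0_compat|]; lra. }
  rewrite exgpd_sf_nonzero, exp_ln by lra.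
  replace (1 + xi * (sigma / xi * (t - 1)) / sigma) with t by (field; lra). reflexivity.
Qed.

Lemma exgpd_incBeta_neg (u Sinf : R) :
  xi < 0 -> below_upper (exgpd_upper sigma xi) u ->
  filterlim (RInt (exgpd_sf sigma xi) u) (at_upper (exgpd_upper sigma xi)) (locally Sinf) ->
  is_incBeta0 (1 + xi * exp u / sigma) (1 - / xi) Sinf.
Proof.
  intros Hxi Hu HS.
  pose proof (exgpd_upper_neg Hxi) as Hupper.
  set (B := ln (- sigma / xi)) in Hupper.
  rewrite Hupper in HS.
  assert (Hq : 0 < - sigma / xi).
  { replace (- sigma / xi) with (sigma / - xi) by (field; lra). apply Rdiv_lt_0_compat; lra. }
  set (S := RInt (exgpd_sf sigma xi) u) in HS |- *.
  set (phi := fun t => ln (sigma / xi * (t - 1))).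
  assert (Hphi_pos : forall t, t < 1 -> 0 < sigma / xi * (t - 1)).
  { intros t Ht. replace (sigma / xi * (t - 1)) with (- sigma / xi * (1 - t)) by (field; lra).
    apply Rmult_lt_0_compat; lra. }
  assert (Hphi_below : forall t, 0 < t < 1 -> phi t < B).
  { intros t Ht. apply ln_increasing; [now apply Hphi_pos|].
    replace (sigma / xi * (t - 1)) with (- sigma / xi * (1 - t)) by (field; lra).
    rewrite <- (Rmult_1_r (- sigma / xi)) at 2. apply Rmult_lt_compat_l; lra. }
  pose proof (exgpd_base_pos u Hu) as Hx0.
  assert (Hx1 : 1 + xi * exp u / sigma < 1).
  { assert (xi * exp u / sigma < 0); [|lra].
    unfold Rdiv. pose proof (exp_pos u). pose proof (Rinv_0_lt_compat _ sigma_pos).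
    assert (xi * exp u < 0) by nra. nra. }
  apply (has_improper_integral_reversed_substitution S _ phi (Some B));
    [exact Hx0 | | | | exact HS].
  - intros t Ht. replace (1 - / xi - 1) with (- / xi) by ring. split.
    + replace (Rpower t (- / xi) / (1 - t)) with (- (/ (t - 1) * exgpd_sf sigma xi (phi t))).
      * apply (is_derive_opp (fun t => S (phi t))), (is_derive_comp S phi).
        -- apply exgpd_RInt_sf_derive; [exact Hu|]. rewrite Hupper. apply Hphi_below. lra.
        -- unfold phi. auto_derive; [apply Hphi_pos; lra|]. field. split; lra.
      * unfold phi. rewrite exgpd_sf_neg_substitution by lra. field. lra.
    + apply ex_derive_R_continuous. unfold Rpower. auto_derive. repeat split; lra.
  - unfold phi. replace (sigma / xi * (1 + xi * exp u / sigma - 1)) with (exp u) by (field; lra).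
    rewrite ln_exp. exact (RInt_point u (exgpd_sf sigma xi)).
  - apply filterlim_within.
    + replace B with (phi 0) by (unfold phi, B; f_equal; field; lra).
      apply continuous_at_right, ex_derive_R_continuous. unfold phi. auto_derive.
      apply Hphi_pos. lra.
    + apply at_right_near. exists 1. split; [lra|]. intros t Ht. apply Hphi_below. lra.
Qed.

Lemma exgpd_sf_zero_substitution (t : R) :
  xi = 0 -> 0 < t -> exgpd_sf sigma xi (ln (sigma * t)) = exp (- t).
Proof.
  intros Hxi Ht. rewrite exgpd_sf_zero, exp_ln by (exact Hxi || apply Rmult_lt_0_compat; lra).
  f_equal. field. lra.
Qed.

Lemma exgpd_uppGamma_zero (u Sinf : R) :
  xi = 0 ->
  filterlim (RInt (exgpd_sf sigma xi) u) (at_upper (exgpd_upper sigma xi)) (locally Sinf) ->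
  is_uppGamma 0 (exp u / sigma) Sinf.
Proof.
  intros Hxi HS.
  pose proof (exgpd_upper_nonneg (Req_le_sym _ _ Hxi)) as Hupper.
  rewrite Hupper in HS.
  set (S := RInt (exgpd_sf sigma xi) u) in HS |- *.
  set (phi := fun t => ln (sigma * t)).
  assert (Hx : 0 < exp u / sigma) by (apply Rdiv_lt_0_compat; [apply exp_pos | exact sigma_pos]).
  assert (DF : forall t, 0 < t -> is_derive (fun t => S (phi t)) t (Rpower t (0 - 1) * exp (- t))).
  { intros t Ht. rewrite Rpower_minus_1, Rpower_O by exact Ht.
    replace (1 / t * exp (- t)) with (/ t * exgpd_sf sigma xi (phi t))
      by (unfold phi; rewrite exgpd_sf_zero_substitution by assumption; field; lra).
    apply (is_derive_comp S phi).
    - apply exgpd_RInt_sf_derive; rewrite Hupper; exact I.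
    - unfold phi. auto_derive; [apply Rmult_lt_0_compat; lra|]. field. lra. }
  unfold is_uppGamma. replace Sinf with (Sinf - S (phi (exp u / sigma))).
  2: { unfold phi. replace (sigma * (exp u / sigma)) with (exp u) by (field; lra).
       rewrite ln_exp. unfold S. rewrite RInt_point. apply Rminus_0_r. }
  apply (has_improper_integral_antiderivative _ (fun t => S (phi t))); [exact I | | |].
  - intros t Ht _. split; [apply DF; lra|].
    apply ex_derive_R_continuous. unfold Rpower. auto_derive. lra.
  - apply (continuous_at_right (fun t => S (phi t))), (is_derive_continuous _ _ _ (DF _ Hx)).
  - apply (fun Hphi => filterlim_comp _ _ _ _ _ _ _ _ Hphi HS).
    intros P [M HP]. exists (exp M / sigma). intros t Ht. apply HP.
    unfold phi. rewrite <- (ln_exp M) at 1. apply ln_increasing; [apply exp_pos|].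
    apply (Rmult_lt_compat_l sigma) in Ht; [|exact sigma_pos].
    replace (sigma * (exp M / sigma)) with (exp M) in Ht by (field; lra). exact Ht.
Qed.

Lemma exgpd_quantile_spec (p : R) :
  xi <> 0 -> 0 < p < 1 ->
  exgpd_cdf sigma xi (exgpd_quantile sigma xi p) = p /\
  below_upper (exgpd_upper sigma xi) (exgpd_quantile sigma xi p).
Proof.
  intros Hxi Hp. unfold exgpd_quantile.
  set (r := Rpower (1 - p) (- xi)).
  assert (Hl : ln (1 - p) < 0) by (rewrite <- ln_1; apply ln_increasing; lra).
  assert (Hr : 0 < r) by apply exp_pos.
  (* [r - 1] has the sign of [xi], since [r = exp (- xi ln (1 - p))] *)
  assert (Hrxi : xi < 0 -> r < 1).
  { intros Hneg. rewrite <- exp_0. apply exp_increasing. nra. }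
  assert (Hpos : 0 < sigma / xi * (r - 1)).
  { destruct (Rlt_dec xi 0) as [Hneg|Hneg].
    - replace (sigma / xi * (r - 1)) with (sigma / - xi * (1 - r)) by (field; lra).
      apply Rmult_lt_0_compat; [apply Rdiv_lt_0_compat|]; [lra | lra | specialize (Hrxi Hneg); lra].
    - assert (1 < r) by (rewrite <- exp_0; apply exp_increasing; nra).
      apply Rmult_lt_0_compat; [apply Rdiv_lt_0_compat|]; lra. }
  split.
  - unfold exgpd_cdf. rewrite exgpd_sf_nonzero, exp_ln by assumption.
    replace (1 + xi * (sigma / xi * (r - 1)) / sigma) with r by (field; lra).
    unfold r. rewrite Rpower_mult.
    replace (- xi * - / xi) with 1 by (field; exact Hxi). rewrite Rpower_1; lra.
  - apply below_exgpd_upper. intros Hneg. apply ln_increasing; [exact Hpos|].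
    assert (0 < - sigma / xi).
    { replace (- sigma / xi) with (sigma / - xi) by (field; lra). apply Rdiv_lt_0_compat; lra. }
    replace (sigma / xi * (r - 1)) with (- sigma / xi * (1 - r)) by (field; lra). nra.
Qed.

End ExGPD.

Theorem mainTheorem15 (sigma xi : R) (Hsigma : 0 < sigma) :
  (forall u : R, (xi < 0 -> u < ln (- sigma / xi)) ->
     exists e : R,
       is_mean_excess sigma xi u e /\
       (0 < xi -> is_incBeta0 (/ (1 + xi * exp u / sigma)) (/ xi)
                              (exgpd_sf sigma xi u * e)) /\
       (xi < 0 -> is_incBeta0 (1 + xi * exp u / sigma) (1 - / xi)
                              (exgpd_sf sigma xi u * e)) /\
       (xi = 0 -> is_uppGamma 0 (exp u / sigma)
                              (exp (- (exp u / sigma)) * e))) /\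
  (xi <> 0 -> forall p : R, 0 < p < 1 ->
     exgpd_cdf sigma xi (exgpd_quantile sigma xi p) = p /\
     exists e : R,
       is_mean_excess sigma xi (exgpd_quantile sigma xi p) e /\
       is_cond_tail_exp sigma xi (exgpd_quantile sigma xi p)
                        (exgpd_quantile sigma xi p + e)).
Proof.
  split.
  - intros u Hu. apply below_exgpd_upper in Hu.
    destruct (exgpd_excess_integrals sigma xi Hsigma u Hu) as [Sinf [HS [Hexcess _]]].
    exists (Sinf / exgpd_sf sigma xi u).
    assert (HSinf : exgpd_sf sigma xi u * (Sinf / exgpd_sf sigma xi u) = Sinf)
      by (field; apply Rgt_not_eq, exgpd_sf_pos).
    rewrite HSinf. split; [exact Hexcess|]. split; [|split]; intros Hxi.
    + exact (exgpd_incBeta_pos sigma xi Hsigma u Sinf Hxi HS).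
    + exact (exgpd_incBeta_neg sigma xi Hsigma u Sinf Hxi Hu HS).
    + rewrite <- (exgpd_sf_zero sigma xi u Hxi), HSinf.
      exact (exgpd_uppGamma_zero sigma xi Hsigma u Sinf Hxi HS).
  - intros Hxi p Hp.
    destruct (exgpd_quantile_spec sigma xi Hsigma p Hxi Hp) as [Hcdf Hq].
    split; [exact Hcdf|].
    destruct (exgpd_excess_integrals sigma xi Hsigma _ Hq) as [Sinf [_ [Hexcess Htail]]].
    eexists. split; [exact Hexcess | exact Htail].
Qed.
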